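(* Let $k$ be an étale algebra over $\mathbb{Q}$ with maximal order $\mathcal{O}_k$, and let $\mathcal{O}'\subset\mathcal{O}\subset\mathcal{O}_k$ be orders with conductors $\mathfrak{f}'$ and $\mathfrak{f}$ respectively. Then $\mathfrak{f}'\subset\mathfrak{f}$. If $p$ is a prime number such that $p\mid N(\mathfrak{f})$ and $p\nmid(\mathcal{O}:\mathcal{O}')$, then $\mathfrak{f}'_p=\mathfrak{f}_p$.
   Context: An étale algebra is $k=k_1\oplus\cdots\oplus k_s$ with number fields $k_i$; $\mathcal{O}_k=\oplus\mathcal{O}_{k_i}$. An order is a subring of $\mathcal{O}_k$ with unit of finite index. The conductor of an order $\mathcal{O}$ is the largest $\mathcal{O}_k$-ideal contained in $\mathcal{O}$. For an integral invertible $\mathcal{O}_k$-ideal $\mathfrak{a}=\oplus\mathfrak{a}_i$, its norm is $N(\mathfrak{a})=\prod N(\mathfrak{a}_i)=(\mathcal{O}_k:\mathfrak{a})$, and its $p$-part $\mathfrak{a}_p$ is $\oplus_i\mathfrak{a}_{i,p}$, where $\mathfrak{a}_{i,p}$ is the product of the prime-power factors of $\mathfrak{a}_i$ at primes above $p$; equivalently $\mathfrak{a}_p=\mathfrak{a}+p^a\mathcal{O}_k$ for all sufficiently large $a$. *)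

From HB Require Import structures.
From mathcomp Require Import all_boot all_order all_algebra all_field.
Set Implicit Arguments. Unset Strict Implicit. Unset Printing Implicit Defensive.
Import Order.TTheory GRing.Theory Num.Theory.
Local Open Scope ring_scope.

(* Number fields are realized (up to isomorphism) as subfields of algC of
   finite dimension over Q. An etale algebra k = k_1 (+) ... (+) k_s is realized
   inside {ffun 'I_s -> algC} (componentwise ring operations) as the set of
   x with x i \in k_i for all i. *)

Definition number_field (K : {pred algC}) : Prop :=
  [/\ 1 \in K,
      {in K &, forall x y, x - y \in K},
      {in K &, forall x y, x * y \in K},
      {in K, forall x, x != 0 -> x^-1 \in K} &
      exists bs : seq algC, all (mem K) bs /\
        forall x, x \in K -> exists c : 'I_(size bs) -> rat,
          x = \sum_(i < size bs) ratr (c i) * bs`_i ].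

Definition elt (s : nat) := {ffun 'I_s -> algC}.

Definition sub_set (s : nat) (A B : elt s -> Prop) : Prop := forall x, A x -> B x.

Definition maxorder (s : nat) (K : 'I_s -> {pred algC}) (x : elt s) : Prop :=
  forall i, x i \in K i /\ x i \in Aint.

(* (A : B) = n : B is a subgroup of A with exactly n cosets in A *)
Definition index_eq (s : nat) (A B : elt s -> Prop) (n : nat) : Prop :=
  exists r : seq (elt s),
    [/\ size r = n,
        forall x, x \in r -> A x,
        forall i j, (i < n)%N -> (j < n)%N -> B (r`_i - r`_j) -> i = j &
        forall a, A a -> exists2 x, x \in r & B (a - x)].

Definition is_order (s : nat) (K : 'I_s -> {pred algC}) (O : elt s -> Prop) : Prop :=
  [/\ sub_set O (maxorder K),
      O 1,
      forall x y, O x -> O y -> O (x - y),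
      forall x y, O x -> O y -> O (x * y) &
      exists n, index_eq (maxorder K) O n].

Definition is_Ok_ideal (s : nat) (K : 'I_s -> {pred algC}) (I : elt s -> Prop) : Prop :=
  [/\ sub_set I (maxorder K),
      I 0,
      forall x y, I x -> I y -> I (x - y) &
      forall a x, maxorder K a -> I x -> I (a * x)].

Definition is_conductor (s : nat) (K : 'I_s -> {pred algC}) (O f : elt s -> Prop) : Prop :=
  [/\ is_Ok_ideal K f, sub_set f O &
      forall I, is_Ok_ideal K I -> sub_set I O -> sub_set I f].

Definition add_pow_Ok (s : nat) (K : 'I_s -> {pred algC}) (I : elt s -> Prop)
    (p a : nat) (x : elt s) : Prop :=
  exists y z, [/\ I y, maxorder K z & x = y + (p ^ a)%N%:R * z].

(* I_p = J_p, where the p-part is a_p = a + p^a O_k for all sufficiently large a *)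
Definition ppart_eq (s : nat) (K : 'I_s -> {pred algC}) (p : nat) (I J : elt s -> Prop) : Prop :=
  exists a0, forall a, (a0 <= a)%N ->
    forall x, add_pow_Ok K I p a x <-> add_pow_Ok K J p a x.

From HB Require Import structures.
From mathcomp Require Import all_boot all_order all_algebra all_field.
Set Implicit Arguments. Unset Strict Implicit.
Import Order.TTheory GRing.Theory Num.Theory.
Local Open Scope ring_scope.

(* If (O : O') = n then n O lies in O', so n f is an O_k-ideal inside O' and
   hence inside the conductor f'.  For p coprime to n, Bezout writes
   1 = u n + v p^a, so every y in f is u (n y) + p^a (v y) and lies in
   f' + p^a O_k.  Hence f' + p^a O_k = f + p^a O_k for every a. *)

Section ZmodClosedPred.
Variables (V : zmodType) (P : V -> Prop).
Hypotheses (P0 : P 0) (PB : forall x y, P x -> P y -> P (x - y)).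

Lemma closedD x y : P x -> P y -> P (x + y).
Proof. by move=> Px Py; have := PB Px (PB P0 Py); rewrite sub0r opprK. Qed.

Lemma closedMn x n : P x -> P (x *+ n).
Proof.
move=> Px; elim: n => [|n IHn]; first by rewrite mulr0n.
by rewrite mulrS; apply: closedD.
Qed.

Lemma closedMz x z : P x -> P (x *~ z).
Proof.
move=> Px; case: z => n; first exact: closedMn.
by rewrite NegzE mulrNz -sub0r; apply: PB => //; apply: closedMn.
Qed.

Lemma closed_sum n (F : 'I_n -> V) : (forall i, P (F i)) -> P (\sum_(i < n) F i).
Proof. by move=> PF; apply: (big_ind P) => //; apply: closedD. Qed.

End ZmodClosedPred.

Section IndexMultiple.
Variables (s : nat) (A B : elt s -> Prop).
Hypotheses (A0 : A 0) (AB : forall x y, A x -> A y -> A (x - y)).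
Hypotheses (B0 : B 0) (BB : forall x y, B x -> B y -> B (x - y)).

(* Translation by x permutes the cosets of B in A; summing the congruences
   x + r_i = r_(sigma i) mod B over all representatives gives n x in B. *)
Lemma index_eq_mulrn n x : index_eq A B n -> A x -> B (x *+ n).
Proof.
move=> [r [size_r rA r_uniq r_cover]] Ax.
have rA_nth (i : 'I_n) : A r`_i by apply/rA/mem_nth; rewrite size_r.
have /fin_all_exists[sigma sigmaP] :
    forall i : 'I_n, exists j : 'I_n, B (x + r`_i - r`_j).
  move=> i.
  have [y yr Bxy] := r_cover _ (closedD A0 AB Ax (rA_nth i)).
  have lt_yn : (index y r < n)%N by rewrite -size_r index_mem.
  by exists (Ordinal lt_yn); rewrite /= nth_index.
have sigma_inj : injective sigma.
  move=> i j eq_ij; apply/val_inj/(r_uniq i j (ltn_ord i) (ltn_ord j)).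
  have := BB (sigmaP i) (sigmaP j).
  by rewrite eq_ij opprB addrA subrK [x + _]addrC addrKA.
have := closed_sum B0 BB sigmaP.
by rewrite sumrB big_split /= sumr_const card_ord (reindex_inj sigma_inj) /= addrK.
Qed.

End IndexMultiple.

Section MaxOrder.
Variables (s : nat) (K : 'I_s -> {pred algC}).
Hypothesis K_field : forall i, number_field (K i).

Lemma maxorderB x y : maxorder K x -> maxorder K y -> maxorder K (x - y).
Proof.
move=> Ox Oy i; rewrite !ffunE.
have [[Kx Ax] [Ky Ay]] := (Ox i, Oy i).
by case: (K_field i) => _ KB _ _ _; split; [apply: KB | apply: rpredB].
Qed.

Lemma maxorder0 : maxorder K 0.
Proof.
move=> i; rewrite ffunE; split; last exact: rpred0.
by case: (K_field i) => K1 KB _ _ _; rewrite -(subrr 1); apply: KB.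
Qed.

Lemma Ok_ideal_mulrn (I : elt s -> Prop) n :
  is_Ok_ideal K I -> is_Ok_ideal K (fun y => exists2 x, I x & y = x *+ n).
Proof.
case=> Isub I0 IB IM; split.
- by move=> _ [x Ix ->]; apply: closedMn maxorder0 maxorderB _ _ (Isub _ Ix).
- by exists 0; rewrite ?mul0rn.
- by move=> _ _ [x Ix ->] [y Iy ->]; exists (x - y); rewrite ?mulrnBl //; apply: IB.
- by move=> a _ Oa [x Ix ->]; exists (a * x); rewrite ?mulrnAr //; apply: IM.
Qed.

Lemma conductor_sub (O O' f f' : elt s -> Prop) :
  sub_set O' O -> is_conductor K O f -> is_conductor K O' f' -> sub_set f' f.
Proof. by move=> O'O [_ _ fmax] [f'I f'O' _]; apply: fmax => // x /f'O' /O'O. Qed.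

Lemma conductor_mulrn_sub (O O' f f' : elt s -> Prop) n :
  is_order K O -> is_order K O' -> index_eq O O' n ->
  is_conductor K O f -> is_conductor K O' f' ->
  forall x, f x -> f' (x *+ n).
Proof.
move=> [_ O1 OB _ _] [_ O'1 O'B _ _] OO' [fI fO _] [_ _ f'max] x fx.
have O0 : O 0 by rewrite -(subrr 1); apply: OB.
have O'0 : O' 0 by rewrite -(subrr 1); apply: O'B.
apply: (f'max _ (Ok_ideal_mulrn n fI)); last by exists x.
by move=> _ [y /fO Oy ->]; apply: index_eq_mulrn OO' Oy.
Qed.

Lemma add_pow_OkS (I J : elt s -> Prop) p a :
  sub_set I J -> sub_set (add_pow_Ok K I p a) (add_pow_Ok K J p a).
Proof. by move=> IJ _ [y [z [Iy Oz ->]]]; exists y, z; split=> //; apply: IJ. Qed.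

Lemma add_pow_Ok_coprime_sub (I J : elt s -> Prop) p n a :
  is_Ok_ideal K I -> is_Ok_ideal K J -> (forall x, I x -> J (x *+ n)) ->
  coprime n (p ^ a) -> sub_set (add_pow_Ok K I p a) (add_pow_Ok K J p a).
Proof.
move=> [Isub _ _ _] [_ J0 JB _] nIJ co_n_pa _ [y [z [Iy Oz ->]]].
have [u [v uv]] := Bezoutz n (p ^ a)%N; rewrite /gcdz /= (eqP co_n_pa) in uv.
exists ((y *+ n) *~ u), (y *~ v + z); split.
- exact/(closedMz J0 JB)/nIJ.
- apply: closedD maxorder0 maxorderB _ _ _ Oz.
  exact: closedMz maxorder0 maxorderB _ _ (Isub _ Iy).
rewrite mulrDr addrA; congr (_ + _).
rewrite mulr_natl !pmulrn -!mulrzA -mulrzDr.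
by rewrite [(n%:Z * u)%R]mulrC uv mulr1z.
Qed.

End MaxOrder.

Theorem lemma2p1 (s : nat) (K : 'I_s -> {pred algC})
    (HK : forall i, number_field (K i))
    (O O' f f' : elt s -> Prop)
    (hO : is_order K O) (hO' : is_order K O') (hsub : sub_set O' O)
    (hf : is_conductor K O f) (hf' : is_conductor K O' f') :
  sub_set f' f /\
  (forall (p Nf idx : nat), prime p ->
     index_eq (maxorder K) f Nf -> (p %| Nf)%N ->
     index_eq O O' idx -> ~~ (p %| idx)%N ->
     ppart_eq K p f' f).
Proof.
have f'f := conductor_sub hsub hf hf'.
split=> // p _ idx p_pr _ _ OO' p_ndvd.
have idx_ff' := conductor_mulrn_sub HK hO hO' OO' hf hf'.
have [[fI _ _] [f'I _ _]] := (hf, hf').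
have coprime_idx a : coprime idx (p ^ a).
  by rewrite coprimeXr // coprime_sym prime_coprime.
exists 0%N => a _ x; split; first exact: add_pow_OkS.
exact: add_pow_Ok_coprime_sub HK _ _ _ _ _ fI f'I idx_ff' (coprime_idx a) x.
Qed.
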